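(* Let $(x_n)$ be generated by (HPPA). Let ${\rm a},{\rm b},{\rm B},{\rm E}:\mathbb{N}\to\mathbb{N}$ be monotone functions satisfying (Q1), (Q3'), (Q3), (Q4) respectively. Let $\mathcal{E},\mathcal{D}\in\mathbb{N}$ satisfy $\mathcal{E}\geq 1+\sum_{i=0}^{{\rm E}(0)}\|e_i\|$ and $\mathcal{D}\geq\|x_0-p\|$ for some $p\in S$, and set $N:=\max\{2\mathcal{D},\mathcal{D}+\mathcal{E}\}$. Then for every $k\in\mathbb{N}$ and every monotone $f:\mathbb{N}\to\mathbb{N}$ there exist $n\leq\Psi(k,f)$ and $x\in B_N$ such that $$\forall i\in[n,f(n)]\ \left(\|J_{\beta_i}(x)-x\|\leq\frac{1}{f(n)+1}\ \wedge\ \langle x_0-x,\,x_i-x\rangle\leq\frac{1}{k+1}\right),$$ where $\Psi(k,f):=\chi_1\big(24N(w_{\hat\nu,N}^{(R)}(0)+1)^2\big)$ with: $R:=4N^4(k+1)^2$; $\nu_f(m):=\delta_{\rm b}(f(m),f(m))$ where $\delta_{\rm b}(k',n'):=\max\{2,{\rm b}(n')\}(k'+1)-1$; $\hat\nu(m):=\nu_f(\chi_1(m))$; $w_{g,N}(m):=\max\{g(24N(m+1)^2),24N(m+1)^2\}$; $\xi(k'):=\max\{{\rm a}(2(2\mathcal{D}+\mathcal{E})(k'+1)-1),{\rm E}(2k'+1)+1\}$; and $\chi_1(k'):=\max\{\xi(4k'+3),{\rm B}(8(\mathcal{D}+\mathcal{E})(k'+1)-1)\}+1$.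
   Context: $X$ is a real Hilbert space, $\mathsf{A}:X\to 2^X$ a maximal monotone operator with zero set $S=\{x:0\in\mathsf{A}(x)\}$, assumed nonempty. For $\beta>0$, $J_\beta:=(Id+\beta\mathsf{A})^{-1}$ is the resolvent, a single-valued nonexpansive map with fixed point set $S$. Given $(\alpha_n)\subset\,]0,1[$, $(\beta_n)\subset(0,\infty)$, $(e_n)\subset X$, $x_0\in X$, (HPPA) is the sequence $x_{n+1}:=\alpha_n x_0+(1-\alpha_n)(J_{\beta_n}(x_n)+e_n)$. (Q1): $\forall k\,\forall n\geq{\rm a}(k)\ \alpha_n\leq\frac{1}{k+1}$. (Q3'): $\forall n\ \beta_n\leq{\rm b}(n)$. (Q3): $\forall k\,\forall n\geq{\rm B}(k)\ \beta_n\geq k$. (Q4): $\forall k\,\forall n\ \sum_{i={\rm E}(k)+1}^{{\rm E}(k)+n}\|e_i\|\leq\frac{1}{k+1}$. $B_N:=\{x\in X:\|x-p\|\leq N\}$ with $p$ the point in $S$ from the hypothesis. Monotone means nondecreasing. $g^{(R)}$ is the $R$-fold composition of $g$ ($g^{(0)}$ the identity). $[a,b]$ is the set of naturals $m$ with $a\le m\le b$. *)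

From Stdlib Require Import Reals Lra Lia Arith.
Open Scope R_scope.

Record HilbertSpace := {
  hcar :> Type;
  hzero : hcar;
  hadd : hcar -> hcar -> hcar;
  hopp : hcar -> hcar;
  hscal : R -> hcar -> hcar;
  hinner : hcar -> hcar -> R;
  hadd_assoc : forall x y z, hadd x (hadd y z) = hadd (hadd x y) z;
  hadd_comm : forall x y, hadd x y = hadd y x;
  hadd_zero : forall x, hadd x hzero = x;
  hadd_opp : forall x, hadd x (hopp x) = hzero;
  hscal_assoc : forall a b x, hscal a (hscal b x) = hscal (a * b) x;
  hscal_one : forall x, hscal 1 x = x;
  hscal_distr_l : forall a x y, hscal a (hadd x y) = hadd (hscal a x) (hscal a y);
  hscal_distr_r : forall a b x, hscal (a + b) x = hadd (hscal a x) (hscal b x);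
  hinner_sym : forall x y, hinner x y = hinner y x;
  hinner_add_l : forall x y z, hinner (hadd x y) z = hinner x z + hinner y z;
  hinner_scal_l : forall a x y, hinner (hscal a x) y = a * hinner x y;
  hinner_pos : forall x, 0 <= hinner x x;
  hinner_def : forall x, hinner x x = 0 -> x = hzero;
  hcomplete : forall u : nat -> hcar,
    (forall eps, 0 < eps -> exists M, forall m n, (M <= m)%nat -> (M <= n)%nat ->
        sqrt (hinner (hadd (u m) (hopp (u n))) (hadd (u m) (hopp (u n)))) < eps) ->
    exists l, forall eps, 0 < eps -> exists M, forall n, (M <= n)%nat ->
        sqrt (hinner (hadd (u n) (hopp l)) (hadd (u n) (hopp l))) < eps
}.

Section Ops.
Variable X : HilbertSpace.
Definition hsub (x y : X) : X := hadd X x (hopp X y).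
Definition hnorm (x : X) : R := sqrt (hinner X x x).
End Ops.
Arguments hsub {X}.
Arguments hnorm {X}.

(** A set-valued operator A : X -> 2^X, given by its graph: [A x u] means u ∈ A(x). *)
Definition monotone_op {X : HilbertSpace} (A : X -> X -> Prop) : Prop :=
  forall x y u v, A x u -> A y v -> 0 <= hinner X (hsub x y) (hsub u v).

Definition maximal_monotone {X : HilbertSpace} (A : X -> X -> Prop) : Prop :=
  monotone_op A /\
  forall x u, (forall y v, A y v -> 0 <= hinner X (hsub x y) (hsub u v)) -> A x u.

(** [J] is the resolvent family of A: J β x is the point y with x ∈ y + β A(y),
    i.e. J β = (Id + β A)^{-1} (single-valued and total for maximal monotone A). *)
Definition is_resolvent {X : HilbertSpace} (A : X -> X -> Prop) (J : R -> X -> X) : Prop :=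
  forall beta x, 0 < beta -> A (J beta x) (hscal X (/ beta) (hsub x (J beta x))).

Fixpoint hppa {X : HilbertSpace} (J : R -> X -> X) (alpha beta : nat -> R)
  (e : nat -> X) (x0 : X) (n : nat) : X :=
  match n with
  | O => x0
  | S m => hadd X (hscal X (alpha m) x0)
             (hscal X (1 - alpha m) (hadd X (J (beta m) (hppa J alpha beta e x0 m)) (e m)))
  end.

Fixpoint sum_from (g : nat -> R) (s len : nat) : R :=
  match len with
  | O => 0
  | S l => g s + sum_from g (S s) l
  end.

Definition monotone_nat (f : nat -> nat) : Prop :=
  forall m n, (m <= n)%nat -> (f m <= f n)%nat.

Section Rate.
Local Open Scope nat_scope.
Variables (a b B E : nat -> nat) (D Ec : nat).
Definition Nrad : nat := Nat.max (2 * D) (D + Ec).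
Definition delta_b (k' n' : nat) : nat := Nat.max 2 (b n') * (k' + 1) - 1.
Definition xi (k' : nat) : nat :=
  Nat.max (a (2 * (2 * D + Ec) * (k' + 1) - 1)) (E (2 * k' + 1) + 1).
Definition chi1 (k' : nat) : nat :=
  Nat.max (xi (4 * k' + 3)) (B (8 * (D + Ec) * (k' + 1) - 1)) + 1.
Definition nu (f : nat -> nat) (m : nat) : nat := delta_b (f m) (f m).
Definition nuhat (f : nat -> nat) (m : nat) : nat := nu f (chi1 m).
Definition wfun (g : nat -> nat) (Nn : nat) (m : nat) : nat :=
  Nat.max (g (24 * Nn * (m + 1) ^ 2)) (24 * Nn * (m + 1) ^ 2).
Definition Rnum (k : nat) : nat := 4 * Nrad ^ 4 * (k + 1) ^ 2.
Definition Psi (k : nat) (f : nat -> nat) : nat :=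
  chi1 (24 * Nrad * (Nat.iter (Rnum k) (wfun (nuhat f) Nrad) 0 + 1) ^ 2).
End Rate.

(* Asymptotic regularity: once alpha_i and e_i are small and beta_i is large, x_{i+1} is
   close to J_{beta_i} x_i, which by the resolvent identity is a (1/beta_i)-approximate
   fixed point of J_1; so the iterates are approximate fixed points of J_1 at a rate.
   The point x is then found by a bounded descent.  Start with z = p.  If some iterate
   x_i of the current window has <x0 - z, x_i - z> > 1/(k+1), move z a step
   t = 1/(4N^2 (k+1)) towards x_i: this lowers |x0 - z|^2 by t/(k+1), and since J_1 is
   nonexpansive and both ends are approximate fixed points, z stays one, with a
   controlled loss of precision that the function w_{nuhat,N} compensates in advance.
   R = 4N^4(k+1)^2 such steps would make |x0 - z|^2 negative, so some window passes the
   test, and there |J_beta z - z| <= max(2, beta) |J_1 z - z| with beta_i <= b(f n). *)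

From Stdlib Require Import Reals Lra Lia Psatz Classical.
Open Scope R_scope.

Section InnerProduct.
Context {X : HilbertSpace}.

Lemma hinner_zero_l (y : X) : hinner X (hzero X) y = 0.
Proof.
  assert (H := hinner_add_l X (hzero X) (hzero X) y).
  rewrite hadd_zero in H. lra.
Qed.

Lemma hinner_opp_l (x y : X) : hinner X (hopp X x) y = - hinner X x y.
Proof.
  assert (H := hinner_add_l X x (hopp X x) y).
  rewrite hadd_opp, hinner_zero_l in H. lra.
Qed.

Lemma hinner_sub_l (x y z : X) : hinner X (hsub x y) z = hinner X x z - hinner X y z.
Proof. unfold hsub. rewrite hinner_add_l, hinner_opp_l. ring. Qed.

Lemma hinner_add_r (x y z : X) : hinner X z (hadd X x y) = hinner X z x + hinner X z y.
Proof. rewrite !(hinner_sym X z). apply hinner_add_l. Qed.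

Lemma hinner_scal_r a (x y : X) : hinner X y (hscal X a x) = a * hinner X y x.
Proof. rewrite !(hinner_sym X y). apply hinner_scal_l. Qed.

Lemma hinner_sub_r (x y z : X) : hinner X z (hsub x y) = hinner X z x - hinner X z y.
Proof. rewrite !(hinner_sym X z). apply hinner_sub_l. Qed.

Lemma hinner_zero_r (y : X) : hinner X y (hzero X) = 0.
Proof. rewrite hinner_sym. apply hinner_zero_l. Qed.

Lemma hsub_eq0 (u v : X) : hsub u v = hzero X -> u = v.
Proof.
  unfold hsub. intro Huv.
  rewrite <- (hadd_zero X u), <- (hadd_opp X v), hadd_assoc, (hadd_comm X u v),
    <- hadd_assoc, Huv, hadd_zero. reflexivity.
Qed.

Lemma hvec_eq (u v : X) : (forall z, hinner X u z = hinner X v z) -> u = v.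
Proof.
  intro Huv. apply hsub_eq0, hinner_def. rewrite hinner_sub_l, Huv. ring.
Qed.

Lemma hinner_lincomb_self r s (u v : X) :
  hinner X (hadd X (hscal X r u) (hscal X s v)) (hadd X (hscal X r u) (hscal X s v))
  = r * r * hinner X u u + 2 * r * s * hinner X u v + s * s * hinner X v v.
Proof.
  rewrite !hinner_add_l, !hinner_add_r, !hinner_scal_l, !hinner_scal_r, (hinner_sym X v u).
  ring.
Qed.

End InnerProduct.

(* The record provides no module structure to compute with, but the inner
   product separates points, so vector identities reduce to ring identities. *)
Ltac hinner_expand :=
  repeat rewrite ?hinner_add_l, ?hinner_scal_l, ?hinner_opp_l, ?hinner_zero_l, ?hinner_sub_l.
Ltac hvec_ring := apply hvec_eq; intro; hinner_expand; ring.
Ltac hvec_field := apply hvec_eq; intro; hinner_expand; field; repeat split; lra.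

Section Norm.
Context {X : HilbertSpace}.

Lemma hnorm_ge0 (u : X) : 0 <= hnorm u.
Proof. apply sqrt_pos. Qed.

Lemma hnorm_sqr (u : X) : hnorm u * hnorm u = hinner X u u.
Proof. apply sqrt_sqrt, hinner_pos. Qed.

Lemma hnorm_le_of_sqr (u : X) r : 0 <= r -> hinner X u u <= r * r -> hnorm u <= r.
Proof.
  intros Hr Hu. unfold hnorm. rewrite <- (sqrt_square r) by exact Hr.
  apply sqrt_le_1_alt, Hu.
Qed.

Lemma hnorm_zero : hnorm (hzero X) = 0.
Proof. unfold hnorm. rewrite hinner_zero_l. apply sqrt_0. Qed.

Lemma cauchy_schwarz (u v : X) : hinner X u v <= hnorm u * hnorm v.
Proof.
  destruct (Req_dec (hinner X v v) 0) as [Hv0|Hv0].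
  { apply hinner_def in Hv0. subst v. rewrite hinner_zero_r.
    apply Rmult_le_pos; apply hnorm_ge0. }
  assert (Hv : 0 < hinner X v v) by (pose proof (hinner_pos X v); lra).
  (* expand 0 <= |u - c v|^2 at the minimizing c = <u,v>/<v,v> *)
  pose proof (hinner_pos X (hadd X (hscal X 1 u) (hscal X (- (hinner X u v / hinner X v v)) v)))
    as Hq.
  rewrite hinner_lincomb_self in Hq.
  assert (Hsq : hinner X u v * hinner X u v <= hinner X u u * hinner X v v).
  { apply Rmult_le_compat_r with (r := hinner X v v) in Hq; [|lra].
    rewrite Rmult_0_l in Hq. field_simplify in Hq; [|lra]. nra. }
  destruct (Rle_dec (hinner X u v) 0).
  - pose proof (hnorm_ge0 u); pose proof (hnorm_ge0 v). nra.
  - unfold hnorm. rewrite <- sqrt_mult by apply hinner_pos.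
    rewrite <- (sqrt_square (hinner X u v)) by lra.
    apply sqrt_le_1_alt, Hsq.
Qed.

Lemma hnorm_add_le (u v : X) : hnorm (hadd X u v) <= hnorm u + hnorm v.
Proof.
  pose proof (hnorm_ge0 u); pose proof (hnorm_ge0 v).
  apply hnorm_le_of_sqr; [lra|].
  replace (hadd X u v) with (hadd X (hscal X 1 u) (hscal X 1 v)) by hvec_ring.
  rewrite hinner_lincomb_self, <- (hnorm_sqr u), <- (hnorm_sqr v).
  pose proof (cauchy_schwarz u v). nra.
Qed.

Lemma hnorm_scal r (u : X) : hnorm (hscal X r u) = Rabs r * hnorm u.
Proof.
  unfold hnorm. rewrite hinner_scal_l, hinner_scal_r, <- Rmult_assoc.
  fold (Rsqr r). rewrite sqrt_mult_alt, sqrt_Rsqr_abs by apply Rle_0_sqr. reflexivity.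
Qed.

Lemma hnorm_scal_ge0 r (u : X) : 0 <= r -> hnorm (hscal X r u) = r * hnorm u.
Proof. intro Hr. rewrite hnorm_scal, Rabs_right; lra. Qed.

Lemma hnorm_sub_sym (u v : X) : hnorm (hsub u v) = hnorm (hsub v u).
Proof.
  replace (hsub u v) with (hscal X (-1) (hsub v u)) by hvec_ring.
  rewrite hnorm_scal, Rabs_left by lra. ring.
Qed.

Lemma hnorm_sub_triangle (u v w : X) : hnorm (hsub u v) <= hnorm (hsub u w) + hnorm (hsub w v).
Proof.
  replace (hsub u v) with (hadd X (hsub u w) (hsub w v)) by hvec_ring. apply hnorm_add_le.
Qed.

End Norm.
Section Resolvent.
Context {X : HilbertSpace} (A : X -> X -> Prop) (J : R -> X -> X).
Hypothesis monoA : monotone_op A.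
Hypothesis resJ : is_resolvent A J.

Lemma resolvent_unique beta (w y y' : X) : 0 < beta ->
  A y (hscal X (/ beta) (hsub w y)) -> A y' (hscal X (/ beta) (hsub w y')) -> y = y'.
Proof.
  intros Hb Hy Hy'.
  pose proof (monoA _ _ _ _ Hy Hy') as Hmon.
  replace (hsub (hscal X (/ beta) (hsub w y)) (hscal X (/ beta) (hsub w y')))
    with (hscal X (- / beta) (hsub y y')) in Hmon by hvec_ring.
  rewrite hinner_scal_r in Hmon.
  pose proof (hinner_pos X (hsub y y')).
  assert (0 < / beta) by (apply Rinv_0_lt_compat; lra).
  apply hsub_eq0, hinner_def. nra.
Qed.

Lemma resolvent_fixpoint beta (p : X) : 0 < beta -> A p (hzero X) -> J beta p = p.
Proof.
  intros Hb Hp. apply (resolvent_unique beta p); auto.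
  replace (hscal X (/ beta) (hsub p p)) with (hzero X) by hvec_ring. exact Hp.
Qed.

Lemma resolvent_identity beta gamma (x : X) : 0 < beta -> 0 < gamma ->
  J beta (hadd X (hscal X (beta / gamma) x) (hscal X (1 - beta / gamma) (J gamma x)))
  = J gamma x.
Proof.
  intros Hb Hg.
  set (w := hadd X (hscal X (beta / gamma) x) (hscal X (1 - beta / gamma) (J gamma x))).
  apply (resolvent_unique beta w); auto.
  replace (hscal X (/ beta) (hsub w (J gamma x)))
    with (hscal X (/ gamma) (hsub x (J gamma x))) by (unfold w; hvec_field).
  apply resJ, Hg.
Qed.

Lemma resolvent_nonexpansive beta (x1 x2 : X) : 0 < beta ->
  hnorm (hsub (J beta x1) (J beta x2)) <= hnorm (hsub x1 x2).
Proof.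
  intro Hb.
  pose proof (monoA _ _ _ _ (resJ beta x1 Hb) (resJ beta x2 Hb)) as Hmon.
  set (y1 := J beta x1) in *. set (y2 := J beta x2) in *.
  replace (hsub (hscal X (/ beta) (hsub x1 y1)) (hscal X (/ beta) (hsub x2 y2)))
    with (hscal X (/ beta) (hsub (hsub x1 x2) (hsub y1 y2))) in Hmon by hvec_ring.
  rewrite hinner_scal_r, hinner_sub_r in Hmon.
  assert (0 < / beta) by (apply Rinv_0_lt_compat; lra).
  assert (Hyy : hinner X (hsub y1 y2) (hsub y1 y2) <= hinner X (hsub y1 y2) (hsub x1 x2))
    by nra.
  pose proof (cauchy_schwarz (hsub y1 y2) (hsub x1 x2)).
  rewrite <- hnorm_sqr in Hyy.
  pose proof (hnorm_ge0 (hsub y1 y2)). pose proof (hnorm_ge0 (hsub x1 x2)).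
  nra.
Qed.

(* J_beta x = J_1 w for w = x/beta + (1 - 1/beta) J_beta x. *)
Lemma resolvent_1_displacement_le beta (x : X) : 0 < beta ->
  hnorm (hsub (J 1 (J beta x)) (J beta x)) <= / beta * hnorm (hsub x (J beta x)).
Proof.
  intro Hb.
  pose proof (resolvent_identity 1 beta x ltac:(lra) Hb) as Hid.
  set (y := J beta x) in *.
  set (w := hadd X (hscal X (1 / beta) x) (hscal X (1 - 1 / beta) y)) in *.
  rewrite <- Hid at 2.
  eapply Rle_trans; [apply resolvent_nonexpansive; lra|].
  replace (hsub y w) with (hscal X (/ beta) (hsub y x)) by (unfold w; hvec_field).
  rewrite hnorm_sub_sym, hnorm_scal_ge0; [lra|].
  left; apply Rinv_0_lt_compat; lra.
Qed.

Lemma resolvent_displacement_le beta (z : X) : 0 < beta ->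
  hnorm (hsub (J beta z) z) <= Rmax 2 beta * hnorm (hsub (J 1 z) z).
Proof.
  intro Hb.
  pose proof (hnorm_ge0 (hsub (J 1 z) z)).
  (* By the resolvent identity the larger-parameter resolvent at z is the other one
     at a point on the segment from z to it. *)
  destruct (Rle_dec 1 beta) as [Hb1|Hb1].
  - pose proof (resolvent_identity 1 beta z ltac:(lra) Hb) as Hid.
    set (y := J beta z) in *.
    set (w := hadd X (hscal X (1 / beta) z) (hscal X (1 - 1 / beta) y)) in *.
    assert (Hbinv : 1 / beta <= 1) by (apply Rmult_le_reg_r with beta; [lra|]; field_simplify; lra).
    assert (Hyz : hnorm (hsub y (J 1 z)) <= (1 - 1 / beta) * hnorm (hsub y z)).
    { rewrite <- Hid at 1. eapply Rle_trans; [apply resolvent_nonexpansive; lra|].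
      replace (hsub w z) with (hscal X (1 - 1 / beta) (hsub y z)) by (unfold w; hvec_field).
      rewrite hnorm_scal_ge0; lra. }
    pose proof (hnorm_sub_triangle y z (J 1 z)).
    pose proof (Rmax_r 2 beta).
    assert (Hy : hnorm (hsub y z) <= beta * hnorm (hsub (J 1 z) z)).
    { apply Rmult_le_reg_l with (1 / beta); [apply Rdiv_lt_0_compat; lra|].
      replace (1 / beta * (beta * hnorm (hsub (J 1 z) z))) with (hnorm (hsub (J 1 z) z))
        by (field; lra).
      lra. }
    eapply Rle_trans; [exact Hy|]. apply Rmult_le_compat_r; lra.
  - pose proof (resolvent_identity beta 1 z Hb ltac:(lra)) as Hid.
    set (w := hadd X (hscal X (beta / 1) z) (hscal X (1 - beta / 1) (J 1 z))) in *.
    assert (Hyz : hnorm (hsub (J beta z) (J 1 z)) <= (1 - beta) * hnorm (hsub (J 1 z) z)).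
    { rewrite <- Hid at 1. eapply Rle_trans; [apply resolvent_nonexpansive; lra|].
      replace (hsub z w) with (hscal X (1 - beta) (hsub z (J 1 z))) by (unfold w; hvec_field).
      rewrite hnorm_scal_ge0, (hnorm_sub_sym z); lra. }
    pose proof (hnorm_sub_triangle (J beta z) z (J 1 z)).
    pose proof (Rmax_l 2 beta). nra.
Qed.

End Resolvent.
Section Nonexpansive.
Context {X : HilbertSpace} (T : X -> X).
Hypothesis nonexpT : forall x y, hnorm (hsub (T x) (T y)) <= hnorm (hsub x y).

Lemma displacement_segment_sqr_le (u v : X) (t d L : R) :
  0 <= t <= 1 -> 0 <= d -> hnorm (hsub (T u) u) <= d -> hnorm (hsub (T v) v) <= d ->
  hnorm (hsub u v) <= L ->
  let w := hadd X u (hscal X t (hsub v u)) in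
  hnorm (hsub (T w) w) * hnorm (hsub (T w) w) <= d * d + 4 * t * (1 - t) * d * L.
Proof.
  intros Ht Hd Hu Hv HL w.
  set (a := hsub u (T w)). set (b := hsub v (T w)). set (l := hnorm (hsub u v)) in *.
  assert (Hl2 : l * l = hinner X (hsub u v) (hsub u v)) by apply hnorm_sqr.
  assert (Hl0 : 0 <= l) by apply hnorm_ge0.
  assert (Ha : hnorm a <= d + t * l).
  { pose proof (hnorm_sub_triangle u (T w) (T u)) as Htri. rewrite (hnorm_sub_sym u (T u)) in Htri.
    enough (hnorm (hsub (T u) (T w)) <= t * l) by (unfold a; lra).
    eapply Rle_trans; [apply nonexpT|].
    replace (hsub u w) with (hscal X t (hsub u v)) by (unfold w; hvec_ring).
    rewrite hnorm_scal_ge0 by lra. fold l. lra. }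
  assert (Hb : hnorm b <= d + (1 - t) * l).
  { pose proof (hnorm_sub_triangle v (T w) (T v)) as Htri. rewrite (hnorm_sub_sym v (T v)) in Htri.
    enough (hnorm (hsub (T v) (T w)) <= (1 - t) * l) by (unfold b; lra).
    eapply Rle_trans; [apply nonexpT|].
    replace (hsub v w) with (hscal X (1 - t) (hsub v u)) by (unfold w; hvec_ring).
    rewrite hnorm_scal_ge0, (hnorm_sub_sym v u) by lra. fold l. lra. }
  rewrite hnorm_sub_sym, hnorm_sqr.
  replace (hsub w (T w)) with (hadd X (hscal X (1 - t) a) (hscal X t b))
    by (unfold a, b, w; hvec_ring).
  replace (hsub u v) with (hadd X (hscal X 1 a) (hscal X (-1) b)) in Hl2
    by (unfold a, b; hvec_ring).
  rewrite hinner_lincomb_self in *.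
  rewrite <- (hnorm_sqr a), <- (hnorm_sqr b) in *.
  pose proof (hnorm_ge0 a). pose proof (hnorm_ge0 b).
  assert (hnorm a * hnorm a <= (d + t * l) * (d + t * l)) by (apply Rmult_le_compat; lra).
  assert (hnorm b * hnorm b <= (d + (1 - t) * l) * (d + (1 - t) * l))
    by (apply Rmult_le_compat; lra).
  assert (0 <= t * (1 - t)) by nra.
  assert (t * (1 - t) * d * l <= t * (1 - t) * d * L) by (apply Rmult_le_compat_l; nra).
  nra.
Qed.

(* This is where the constant 24 in w_{g,N} comes from. *)
Lemma displacement_segment_le (u v : X) (t L Q : R) :
  0 <= t <= 1 -> 1 <= L -> 1 <= Q ->
  hnorm (hsub (T u) u) <= 1 / (24 * L * (Q * Q)) ->
  hnorm (hsub (T v) v) <= 1 / (24 * L * (Q * Q)) ->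
  hnorm (hsub u v) <= 2 * L ->
  let w := hadd X u (hscal X t (hsub v u)) in
  hnorm (hsub (T w) w) <= 1 / Q.
Proof.
  intros Ht HL HQ Hu Hv Huv w.
  set (d := 1 / (24 * L * (Q * Q))) in *.
  assert (Hd0 : 0 < d) by (unfold d; apply Rdiv_lt_0_compat; nra).
  pose proof (displacement_segment_sqr_le u v t d (2 * L) Ht ltac:(lra) Hu Hv Huv) as Hsq.
  cbv zeta in Hsq. fold w in Hsq.
  assert (Hdd : d * (24 * L * (Q * Q)) = 1) by (unfold d; field; nra).
  assert (Hd : d <= L).
  { assert (1 <= 24 * L * (Q * Q)) by nra. nra. }
  assert (H3 : 3 * L * d = 1 / (8 * (Q * Q))) by (unfold d; field; nra).
  assert (H8 : 1 / (8 * (Q * Q)) <= (1 / Q) * (1 / Q)).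
  { replace (1 / Q * (1 / Q)) with (1 / (Q * Q)) by (field; lra).
    unfold Rdiv. rewrite !Rmult_1_l. apply Rinv_le_contravar; nra. }
  assert (Ht4 : 4 * t * (1 - t) <= 1) by (pose proof (pow2_ge_0 (2 * t - 1)); nra).
  assert (0 < 1 / Q) by (apply Rdiv_lt_0_compat; lra).
  set (h := hnorm (hsub (T w) w)) in *.
  assert (0 <= h) by apply hnorm_ge0.
  assert (d * d <= L * d) by nra.
  assert (4 * t * (1 - t) * d * (2 * L) <= 2 * L * d).
  { replace (4 * t * (1 - t) * d * (2 * L)) with ((4 * t * (1 - t)) * (2 * L * d)) by ring.
    assert (0 <= 2 * L * d) by nra. nra. }
  nra.
Qed.

End Nonexpansive.

Lemma hinner_segment_self {X : HilbertSpace} (x0 z y : X) (t : R) :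
  hinner X (hsub x0 (hadd X z (hscal X t (hsub y z)))) (hsub x0 (hadd X z (hscal X t (hsub y z))))
  = hinner X (hsub x0 z) (hsub x0 z) - 2 * t * hinner X (hsub x0 z) (hsub y z)
    + t * t * hinner X (hsub y z) (hsub y z).
Proof.
  replace (hsub x0 (hadd X z (hscal X t (hsub y z))))
    with (hadd X (hscal X 1 (hsub x0 z)) (hscal X (-t) (hsub y z))) by hvec_ring.
  rewrite hinner_lincomb_self. ring.
Qed.

Section SumFrom.
Variable g : nat -> R.
Hypothesis g_ge0 : forall i, 0 <= g i.

Lemma sum_from_ge0 s n : 0 <= sum_from g s n.
Proof. revert s; induction n; intro s; simpl; [lra|]. pose proof (IHn (S s)); pose proof (g_ge0 s); lra. Qed.

Lemma sum_from_add s n m : sum_from g s (n + m) = sum_from g s n + sum_from g (s + n) m.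
Proof.
  revert s; induction n; intro s; simpl.
  - rewrite Nat.add_0_r. ring.
  - rewrite IHn. replace (S s + n)%nat with (s + S n)%nat by lia. ring.
Qed.

Lemma sum_from_le_add s n m : sum_from g s n <= sum_from g s (n + m).
Proof. rewrite sum_from_add. pose proof (sum_from_ge0 (s + n) m). lra. Qed.

Lemma le_sum_from s j : (s <= j)%nat -> g j <= sum_from g s (S (j - s)).
Proof.
  intro Hsj. replace (S (j - s)) with (j - s + 1)%nat by lia.
  rewrite sum_from_add. simpl. replace (s + (j - s))%nat with j by lia.
  pose proof (sum_from_ge0 s (j - s)). lra.
Qed.

End SumFrom.

Lemma iter_le_iter (g : nat -> nat) : (forall m, (m <= g m)%nat) ->
  forall i j, (i <= j)%nat -> (Nat.iter i g 0 <= Nat.iter j g 0)%nat.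
Proof.
  intros Hg i j Hij. induction Hij; [lia|]. simpl. specialize (Hg (Nat.iter m g 0%nat)). lia.
Qed.

Lemma Rdiv_1_le_contravar a c : 0 < c -> c <= a -> 1 / a <= 1 / c.
Proof. intros. unfold Rdiv. rewrite !Rmult_1_l. apply Rinv_le_contravar; lra. Qed.

Lemma INR_pred_add1 n : (1 <= n)%nat -> INR (n - 1) + 1 = INR n.
Proof. intro Hn. rewrite minus_INR by exact Hn. simpl. ring. Qed.

Section HPPA.
Context {X : HilbertSpace} (A : X -> X -> Prop) (J : R -> X -> X)
  (alpha beta : nat -> R) (e : nat -> X) (x0 p : X)
  (a b B E : nat -> nat) (D Ec : nat).
Hypothesis monoA : monotone_op A.
Hypothesis resJ : is_resolvent A J.
Hypothesis zero_p : A p (hzero X).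
Hypothesis alpha_range : forall n, 0 < alpha n < 1.
Hypothesis beta_pos : forall n, 0 < beta n.
Hypothesis mono_a : monotone_nat a.
Hypothesis mono_b : monotone_nat b.
Hypothesis mono_B : monotone_nat B.
Hypothesis mono_E : monotone_nat E.
Hypothesis Q1 : forall k n, (a k <= n)%nat -> alpha n <= 1 / (INR k + 1).
Hypothesis Q3' : forall n, beta n <= INR (b n).
Hypothesis Q3 : forall k n, (B k <= n)%nat -> INR k <= beta n.
Hypothesis Q4 : forall k n, sum_from (fun i => hnorm (e i)) (E k + 1)%nat n <= 1 / (INR k + 1).
Hypothesis Ec_bound : 1 + sum_from (fun i => hnorm (e i)) 0%nat (E 0%nat + 1)%nat <= INR Ec.
Hypothesis D_bound : hnorm (hsub x0 p) <= INR D.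

Local Notation x := (hppa J alpha beta e x0).
Local Notation err := (fun i => hnorm (e i)).
Local Notation Nr := (INR (Nrad D Ec)).
Local Notation eps k := (1 / (INR k + 1)).

Lemma err_ge0 i : 0 <= err i.
Proof. apply hnorm_ge0. Qed.

Lemma Ec_ge1 : (1 <= Ec)%nat.
Proof.
  pose proof (sum_from_ge0 err err_ge0 0 (E 0 + 1)).
  apply INR_le. simpl. lra.
Qed.

Lemma Nrad_bounds : 1 <= Nr /\ 2 * INR D <= Nr /\ INR D + INR Ec <= Nr.
Proof.
  pose proof Ec_ge1.
  assert (H1 : (1 <= Nrad D Ec)%nat) by (unfold Nrad; lia).
  assert (H2 : (2 * D <= Nrad D Ec)%nat) by (unfold Nrad; lia).
  assert (H3 : (D + Ec <= Nrad D Ec)%nat) by (unfold Nrad; lia).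
  apply le_INR in H1, H2, H3. rewrite mult_INR in H2. rewrite plus_INR in H3.
  simpl in H1, H2. lra.
Qed.

Lemma err_sum_le n : sum_from err 0 n <= INR Ec.
Proof.
  pose proof (sum_from_le_add err err_ge0 0 n (E 0 + 1)) as Hn.
  rewrite Nat.add_comm, sum_from_add, Nat.add_0_l in Hn.
  pose proof (Q4 0 n) as Htail. simpl in Htail. rewrite Rplus_0_l, Rdiv_1_r in Htail.
  lra.
Qed.

Lemma resolvent_fixes_p beta' : 0 < beta' -> J beta' p = p.
Proof. intro. apply (resolvent_fixpoint A); auto. Qed.

Lemma hppa_dist_le n : hnorm (hsub (x n) p) <= hnorm (hsub x0 p) + sum_from err 0 n.
Proof.
  induction n as [|n IHn]; [simpl; lra|].
  replace (sum_from err 0 (S n)) with (sum_from err 0 n + err n)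
    by (rewrite <- Nat.add_1_r, sum_from_add; simpl; ring).
  cbn [hppa].
  set (y := J (beta n) (x n)).
  replace (hsub (hadd X (hscal X (alpha n) x0) (hscal X (1 - alpha n) (hadd X y (e n)))) p)
    with (hadd X (hscal X (alpha n) (hsub x0 p)) (hscal X (1 - alpha n) (hadd X (hsub y p) (e n))))
    by hvec_ring.
  destruct (alpha_range n).
  eapply Rle_trans; [apply hnorm_add_le|].
  rewrite !hnorm_scal_ge0 by lra.
  pose proof (hnorm_add_le (hsub y p) (e n)).
  pose proof (resolvent_nonexpansive A J monoA resJ (beta n) (x n) p (beta_pos n)) as Hne.
  rewrite resolvent_fixes_p in Hne by apply beta_pos. fold y in Hne.
  pose proof (sum_from_ge0 err err_ge0 0 n). pose proof (err_ge0 n).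
  cbv beta in *.
  assert (Hye : hnorm (hadd X (hsub y p) (e n))
                <= hnorm (hsub x0 p) + sum_from err 0 n + hnorm (e n)) by lra.
  apply Rmult_le_compat_l with (r := 1 - alpha n) in Hye; [|lra].
  assert (0 <= alpha n * (sum_from err 0 n + hnorm (e n))) by (apply Rmult_le_pos; lra).
  lra.
Qed.

Lemma hppa_bounded n : hnorm (hsub (x n) p) <= INR D + INR Ec.
Proof. pose proof (hppa_dist_le n). pose proof (err_sum_le n). lra. Qed.

Lemma resolvent_hppa_bounded n : hnorm (hsub (J (beta n) (x n)) p) <= INR D + INR Ec.
Proof.
  pose proof (resolvent_nonexpansive A J monoA resJ (beta n) (x n) p (beta_pos n)) as Hne.
  rewrite resolvent_fixes_p in Hne by apply beta_pos.
  pose proof (hppa_bounded n). lra.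
Qed.

Lemma hppa_step_close m i : (xi a E D Ec m <= i)%nat ->
  hnorm (hsub (x (S i)) (J (beta i) (x i))) <= 1 / (INR m + 1).
Proof.
  unfold xi. intro Hi.
  pose proof Ec_ge1. pose proof (pos_INR m). pose proof (pos_INR D).
  assert (HEc1 : 1 <= INR Ec) by (apply (le_INR 1); lia).
  set (y := J (beta i) (x i)).
  destruct (alpha_range i) as [Ha0 Ha1].
  assert (Halpha : alpha i * (2 * INR D + INR Ec) <= 1 / (2 * (INR m + 1))).
  { pose proof (Q1 (2 * (2 * D + Ec) * (m + 1) - 1) i ltac:(lia)) as Hq.
    rewrite INR_pred_add1 in Hq by nia.
    repeat rewrite ?mult_INR, ?plus_INR in Hq. cbn [INR] in Hq.
    apply Rmult_le_compat_r with (r := 2 * INR D + INR Ec) in Hq; [|lra].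
    eapply Rle_trans; [exact Hq|]. right. field. lra. }
  assert (Herr : hnorm (e i) <= 1 / (2 * (INR m + 1))).
  { pose proof (le_sum_from err err_ge0 (E (2 * m + 1) + 1) i ltac:(lia)) as Hterm.
    pose proof (Q4 (2 * m + 1) (S (i - (E (2 * m + 1) + 1)))) as Htail.
    replace (INR (2 * m + 1) + 1) with (2 * (INR m + 1)) in Htail
      by (rewrite plus_INR, mult_INR; simpl; ring).
    cbv beta in Hterm. lra. }
  assert (Hx0y : hnorm (hsub x0 y) <= 2 * INR D + INR Ec).
  { pose proof (hnorm_sub_triangle x0 y p) as Htri. rewrite (hnorm_sub_sym p y) in Htri.
    pose proof (resolvent_hppa_bounded i) as Hy. fold y in Hy. lra. }
  change (x (S i)) with (hadd X (hscal X (alpha i) x0) (hscal X (1 - alpha i) (hadd X y (e i)))).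
  replace (hsub (hadd X (hscal X (alpha i) x0) (hscal X (1 - alpha i) (hadd X y (e i)))) y)
    with (hadd X (hscal X (alpha i) (hsub x0 y)) (hscal X (1 - alpha i) (e i))) by hvec_ring.
  eapply Rle_trans; [apply hnorm_add_le|].
  rewrite !hnorm_scal_ge0 by lra.
  assert (alpha i * hnorm (hsub x0 y) <= alpha i * (2 * INR D + INR Ec))
    by (apply Rmult_le_compat_l; lra).
  assert (0 <= alpha i * hnorm (e i)) by (apply Rmult_le_pos; [lra|apply hnorm_ge0]).
  assert (1 / (2 * (INR m + 1)) + 1 / (2 * (INR m + 1)) = 1 / (INR m + 1)) by (field; lra).
  lra.
Qed.

Lemma resolvent_1_hppa_small k' i : (B (8 * (D + Ec) * (k' + 1) - 1) <= i)%nat ->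
  hnorm (hsub (J 1 (J (beta i) (x i))) (J (beta i) (x i))) <= 1 / (2 * (INR k' + 1)).
Proof.
  intro Hi.
  pose proof Ec_ge1. pose proof (pos_INR k'). pose proof (pos_INR D).
  assert (HEc1 : 1 <= INR Ec) by (apply (le_INR 1); lia).
  set (y := J (beta i) (x i)).
  set (c := INR D + INR Ec).
  assert (Hc : 1 <= c) by (unfold c; lra).
  assert (Hbeta : 4 * c * (INR k' + 1) <= beta i).
  { pose proof (Q3 _ i Hi) as Hq.
    rewrite minus_INR in Hq by nia. repeat rewrite ?mult_INR, ?plus_INR in Hq. cbn [INR] in Hq.
    fold c in Hq.
    assert (1 <= c * (INR k' + 1)) by nra. lra. }
  assert (Hxy : hnorm (hsub (x i) y) <= 2 * c).
  { pose proof (hnorm_sub_triangle (x i) y p) as Htri. rewrite (hnorm_sub_sym p y) in Htri.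
    pose proof (hppa_bounded i). pose proof (resolvent_hppa_bounded i) as Hy. fold y in Hy.
    unfold c. lra. }
  eapply Rle_trans; [apply (resolvent_1_displacement_le A J monoA resJ _ _ (beta_pos i))|].
  fold y.
  replace (1 / (2 * (INR k' + 1))) with (/ (4 * c * (INR k' + 1)) * (2 * c)) by (field; lra).
  apply Rmult_le_compat; [left; apply Rinv_0_lt_compat, beta_pos | apply hnorm_ge0 | | exact Hxy].
  apply Rinv_le_contravar; [nra | exact Hbeta].
Qed.

Lemma hppa_asymptotic_regularity k' i :
  (Nat.max (xi a E D Ec (4 * k' + 3)) (B (8 * (D + Ec) * (k' + 1) - 1)) <= i)%nat ->
  hnorm (hsub (J 1 (x (S i))) (x (S i))) <= 1 / (INR k' + 1).
Proof.
  intro Hi.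
  pose proof (pos_INR k').
  pose proof (hppa_step_close (4 * k' + 3) i ltac:(lia)) as Hstep.
  pose proof (resolvent_1_hppa_small k' i ltac:(lia)) as Hsmall.
  set (y := J (beta i) (x i)) in *. set (x' := x (S i)) in *.
  replace (INR (4 * k' + 3) + 1) with (4 * (INR k' + 1)) in Hstep
    by (rewrite plus_INR, mult_INR; simpl; ring).
  pose proof (hnorm_sub_triangle (J 1 x') x' (J 1 y)).
  pose proof (hnorm_sub_triangle (J 1 y) x' y).
  pose proof (resolvent_nonexpansive A J monoA resJ 1 x' y ltac:(lra)).
  rewrite (hnorm_sub_sym y x') in *.
  assert (2 * (1 / (4 * (INR k' + 1))) + 1 / (2 * (INR k' + 1)) = 1 / (INR k' + 1))
    by (field; lra).
  lra.
Qed.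

Lemma chi1_monotone k1 k2 : (k1 <= k2)%nat ->
  (chi1 a B E D Ec k1 <= chi1 a B E D Ec k2)%nat.
Proof.
  intro Hk. unfold chi1, xi.
  assert (a (2 * (2 * D + Ec) * (4 * k1 + 3 + 1) - 1) <= a (2 * (2 * D + Ec) * (4 * k2 + 3 + 1) - 1))%nat
    by (apply mono_a; nia).
  assert (E (2 * (4 * k1 + 3) + 1) <= E (2 * (4 * k2 + 3) + 1))%nat by (apply mono_E; lia).
  assert (B (8 * (D + Ec) * (k1 + 1) - 1) <= B (8 * (D + Ec) * (k2 + 1) - 1))%nat
    by (apply mono_B; nia).
  lia.
Qed.

Definition w_nuhat (f : nat -> nat) : nat -> nat := wfun (nuhat a b B E D Ec f) (Nrad D Ec).

Lemma w_nuhat_inflationary f m : (m <= w_nuhat f m)%nat.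
Proof.
  pose proof Ec_ge1. unfold w_nuhat, wfun, Nrad. rewrite Nat.pow_2_r. nia.
Qed.

Lemma resolvent_window_bound f m (z : X) :
  hnorm (hsub (J 1 z) z) <= 1 / (INR (nu b f m) + 1) ->
  forall i, (i <= f m)%nat -> hnorm (hsub (J (beta i) z) z) <= 1 / (INR (f m) + 1).
Proof.
  intros Hz i Hi.
  set (M := Nat.max 2 (b (f m))).
  assert (HnuM : INR (nu b f m) + 1 = INR M * (INR (f m) + 1)).
  { unfold nu, delta_b. fold M. rewrite INR_pred_add1 by lia.
    rewrite mult_INR, plus_INR. reflexivity. }
  assert (HM2 : 2 <= INR M) by (apply (le_INR 2); lia).
  assert (HbM : Rmax 2 (beta i) <= INR M).
  { apply Rmax_lub; [exact HM2|]. eapply Rle_trans; [apply Q3'|].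
    apply le_INR. pose proof (mono_b i (f m) Hi). lia. }
  pose proof (pos_INR (f m)).
  eapply Rle_trans; [apply (resolvent_displacement_le A J monoA resJ _ _ (beta_pos i))|].
  rewrite HnuM in Hz.
  replace (1 / (INR (f m) + 1)) with (INR M * (1 / (INR M * (INR (f m) + 1)))) by (field; lra).
  apply Rmult_le_compat; [pose proof (Rmax_l 2 (beta i)); lra | apply hnorm_ge0 | exact HbM | exact Hz].
Qed.

Definition metastable_at (k : nat) (f : nat -> nat) : Prop :=
  exists n : nat, (n <= Psi a b B E D Ec k f)%nat /\
    exists z : X, hnorm (hsub z p) <= Nr /\
      forall i : nat, (n <= i <= f n)%nat ->
        hnorm (hsub (J (beta i) z) z) <= 1 / (INR (f n) + 1) /\
        hinner X (hsub x0 z) (hsub (x i) z) <= eps k.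

Definition descent_gain (k : nat) : R := eps k * eps k / (4 * Nr * Nr).

Lemma descent_gain_pos k : 0 < descent_gain k.
Proof.
  pose proof (pos_INR k). destruct Nrad_bounds as [HN1 _].
  unfold descent_gain. apply Rdiv_lt_0_compat; [|nra].
  assert (0 < eps k) by (apply Rdiv_lt_0_compat; lra). nra.
Qed.

(* Each descent step lowers |x0 - z|^2 by descent_gain k, so at most Rnum k steps
   fit below D^2; after j steps z must be an approximate fixed point of J 1 to the
   precision required by the Rnum k - j steps that may still follow. *)
Definition descent_invariant (k : nat) (f : nat -> nat) (j : nat) : Prop :=
  exists z : X,
    hinner X (hsub x0 z) (hsub x0 z) + INR j * descent_gain k <= INR D * INR D /\
    hnorm (hsub (J 1 z) z) <= 1 / (INR (Nat.iter (Rnum D Ec k - j) (w_nuhat f) 0%nat) + 1).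

Lemma descent_point_bounded (z : X) :
  hinner X (hsub x0 z) (hsub x0 z) <= INR D * INR D -> hnorm (hsub z p) <= Nr.
Proof.
  intro Hz.
  assert (Hx0z : hnorm (hsub x0 z) <= INR D) by (apply hnorm_le_of_sqr; [apply pos_INR | exact Hz]).
  pose proof (hnorm_sub_triangle z p x0) as Htri. rewrite (hnorm_sub_sym z x0) in Htri.
  pose proof Nrad_bounds. lra.
Qed.

Lemma descent_exit k f q (z : X) :
  (q <= Nat.iter (Rnum D Ec k) (w_nuhat f) 0)%nat ->
  hinner X (hsub x0 z) (hsub x0 z) <= INR D * INR D ->
  hnorm (hsub (J 1 z) z) <= 1 / (INR (w_nuhat f q) + 1) ->
  let n := chi1 a B E D Ec (24 * Nrad D Ec * (q + 1) ^ 2) in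
  (forall i, (n <= i <= f n)%nat -> hinner X (hsub x0 z) (hsub (x i) z) <= eps k) ->
  metastable_at k f.
Proof.
  intros Hq Hz HJz n Hsmall.
  exists n. split.
  { unfold Psi. fold (w_nuhat f). apply chi1_monotone.
    apply Nat.mul_le_mono_l, Nat.pow_le_mono_l. lia. }
  exists z. split; [now apply descent_point_bounded|].
  intros i Hi. split; [|now apply Hsmall].
  apply (resolvent_window_bound f n z); [|lia].
  eapply Rle_trans; [exact HJz|].
  apply Rdiv_1_le_contravar; [pose proof (pos_INR (nu b f n)); lra|].
  apply Rplus_le_compat_r, le_INR. unfold w_nuhat, wfun, nuhat. fold n. lia.
Qed.

Lemma descent_progress k f j q (z : X) i :
  hinner X (hsub x0 z) (hsub x0 z) + INR j * descent_gain k <= INR D * INR D ->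
  hnorm (hsub (J 1 z) z) <= 1 / (INR (w_nuhat f q) + 1) ->
  (chi1 a B E D Ec (24 * Nrad D Ec * (q + 1) ^ 2) <= i)%nat ->
  eps k < hinner X (hsub x0 z) (hsub (x i) z) ->
  exists z' : X,
    hinner X (hsub x0 z') (hsub x0 z') + INR (S j) * descent_gain k <= INR D * INR D /\
    hnorm (hsub (J 1 z') z') <= 1 / (INR q + 1).
Proof.
  intros Hz HJz Hi Hlarge.
  destruct Nrad_bounds as [HN1 [HN2 HN3]].
  pose proof (pos_INR k). pose proof (pos_INR q). pose proof (pos_INR j).
  set (k' := (24 * Nrad D Ec * (q + 1) ^ 2)%nat) in *.
  assert (Hk' : INR k' = 24 * Nr * ((INR q + 1) * (INR q + 1)))
    by (unfold k'; rewrite !mult_INR, pow_INR, plus_INR; simpl; ring).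
  destruct i as [|i]; [unfold chi1 in Hi; lia|].
  assert (Hreg := hppa_asymptotic_regularity k' i ltac:(unfold chi1 in Hi; lia)).
  set (y := x (S i)) in *.
  set (ek := eps k) in *.
  assert (Hek : 0 < ek <= 1).
  { unfold ek. split; [apply Rdiv_lt_0_compat; lra|].
    rewrite <- Rdiv_1_r. apply Rdiv_1_le_contravar; lra. }
  set (t := ek / (4 * Nr * Nr)).
  assert (Htek : t * (4 * Nr * Nr) = ek) by (unfold t; field; lra).
  assert (Ht : 0 < t <= 1).
  { split; [unfold t; apply Rdiv_lt_0_compat; nra | nra]. }
  assert (Hzy : hnorm (hsub z y) <= 2 * Nr).
  { assert (Hz0 : hinner X (hsub x0 z) (hsub x0 z) <= INR D * INR D)
      by (pose proof (Rmult_le_pos _ _ (pos_INR j) (Rlt_le _ _ (descent_gain_pos k))); lra).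
    pose proof (descent_point_bounded z Hz0) as Hzp.
    pose proof (hppa_bounded (S i)) as Hyp. fold y in Hyp.
    pose proof (hnorm_sub_triangle z y p) as Htri. rewrite (hnorm_sub_sym p y) in Htri. lra. }
  exists (hadd X z (hscal X t (hsub y z))). split.
  - (* the step towards y gains 2 t ek and loses at most t^2 (2N)^2 = t ek *)
    rewrite hinner_segment_self, S_INR, <- (hnorm_sqr (hsub y z)), (hnorm_sub_sym y z).
    pose proof (hnorm_ge0 (hsub z y)).
    assert (hnorm (hsub z y) * hnorm (hsub z y) <= 4 * Nr * Nr) by nra.
    assert (descent_gain k = t * ek) by (unfold descent_gain, t; fold ek; field; lra).
    nra.
  - apply (displacement_segment_le (J 1)
             (fun u v => resolvent_nonexpansive A J monoA resJ 1 u v Rlt_0_1) z y t Nr);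
      [lra | lra | lra | | | exact Hzy].
    + eapply Rle_trans; [exact HJz|]. rewrite <- Hk'.
      assert (Hw : (k' <= w_nuhat f q)%nat) by (unfold w_nuhat, wfun; fold k'; lia).
      apply le_INR in Hw.
      apply Rdiv_1_le_contravar; [nra | lra].
    + eapply Rle_trans; [exact Hreg|]. rewrite <- Hk'.
      apply Rdiv_1_le_contravar; [nra | lra].
Qed.

Lemma descent_step k f j : (j < Rnum D Ec k)%nat ->
  descent_invariant k f j -> metastable_at k f \/ descent_invariant k f (S j).
Proof.
  intros Hj [z [Hz HJz]].
  set (q := Nat.iter (Rnum D Ec k - S j) (w_nuhat f) 0%nat).
  replace (Rnum D Ec k - j)%nat with (S (Rnum D Ec k - S j)) in HJz by lia.
  change (Nat.iter (S _) _ _) with (w_nuhat f q) in HJz.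
  set (n := chi1 a B E D Ec (24 * Nrad D Ec * (q + 1) ^ 2)).
  destruct (classic (forall i, (n <= i <= f n)%nat ->
                       hinner X (hsub x0 z) (hsub (x i) z) <= eps k)) as [Hsmall|Hlarge].
  - left. apply (descent_exit k f q z); auto.
    + apply iter_le_iter; [apply w_nuhat_inflationary | lia].
    + pose proof (Rmult_le_pos _ _ (pos_INR j) (Rlt_le _ _ (descent_gain_pos k))). lra.
  - right. apply not_all_ex_not in Hlarge as [i Hi].
    apply imply_to_and in Hi as [Hin Hgt]. apply Rnot_le_lt in Hgt.
    destruct (descent_progress k f j q z i Hz HJz ltac:(lia) Hgt) as [z' Hz'].
    now exists z'.
Qed.

Lemma descent_invariant_0 k f : descent_invariant k f 0.
Proof.
  exists p. split.
  - rewrite Rmult_0_l, Rplus_0_r, <- hnorm_sqr.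
    apply Rmult_le_compat; auto using hnorm_ge0.
  - rewrite resolvent_fixes_p by lra.
    replace (hsub p p) with (hzero X) by hvec_ring. rewrite hnorm_zero.
    left. apply Rdiv_lt_0_compat; [lra|]. rewrite <- S_INR. apply lt_0_INR, Nat.lt_0_succ.
Qed.

(* Rnum k descent steps would push |x0 - z|^2 below D^2 - N^2 < 0. *)
Lemma descent_invariant_Rnum k f : ~ descent_invariant k f (Rnum D Ec k).
Proof.
  intros [z [Hz _]].
  destruct Nrad_bounds as [HN1 [HN2 _]].
  assert (HR : INR (Rnum D Ec k) * descent_gain k = Nr * Nr).
  { unfold Rnum, descent_gain. rewrite !mult_INR, !pow_INR, plus_INR. simpl.
    field. pose proof (pos_INR k). split; lra. }
  rewrite HR in Hz. pose proof (hinner_pos X (hsub x0 z)). pose proof (pos_INR D). nra.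
Qed.

Lemma hppa_metastability k f : metastable_at k f.
Proof.
  assert (Hdescent : forall j, (j <= Rnum D Ec k)%nat -> metastable_at k f \/ descent_invariant k f j).
  { induction j as [|j IHj]; intro Hj; [right; apply descent_invariant_0|].
    destruct IHj as [Hmeta|Hinv]; [lia | now left | now apply descent_step]. }
  destruct (Hdescent (Rnum D Ec k) (le_n _)) as [Hmeta|Hinv]; [exact Hmeta|].
  contradiction (descent_invariant_Rnum k f Hinv).
Qed.

End HPPA.

Theorem mainTheorem12
  (X : HilbertSpace) (A : X -> X -> Prop) (J : R -> X -> X)
  (alpha beta : nat -> R) (e : nat -> X) (x0 p : X)
  (a b B E : nat -> nat) (D Ec : nat) :
  maximal_monotone A ->
  is_resolvent A J ->
  A p (hzero X) ->
  (forall n, 0 < alpha n < 1) ->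
  (forall n, 0 < beta n) ->
  monotone_nat a -> monotone_nat b -> monotone_nat B -> monotone_nat E ->
  (forall k n, (a k <= n)%nat -> alpha n <= 1 / (INR k + 1)) ->
  (forall n, beta n <= INR (b n)) ->
  (forall k n, (B k <= n)%nat -> INR k <= beta n) ->
  (forall k n, sum_from (fun i => hnorm (e i)) (E k + 1)%nat n <= 1 / (INR k + 1)) ->
  1 + sum_from (fun i => hnorm (e i)) 0%nat (E 0%nat + 1)%nat <= INR Ec ->
  hnorm (hsub x0 p) <= INR D ->
  forall (k : nat) (f : nat -> nat), monotone_nat f ->
  exists n : nat, (n <= Psi a b B E D Ec k f)%nat /\
    exists x : X, hnorm (hsub x p) <= INR (Nrad D Ec) /\
      forall i : nat, (n <= i <= f n)%nat ->
        hnorm (hsub (J (beta i) x) x) <= 1 / (INR (f n) + 1) /\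
        hinner X (hsub x0 x) (hsub (hppa J alpha beta e x0 i) x) <= 1 / (INR k + 1).
Proof.
  intros [monoA _] ? ? ? ? ? ? ? ? ? ? ? ? ? ? k f _.
  eapply hppa_metastability; eassumption.
Qed.
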